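(* For a positive integer $k$, let $N(k)$ be the maximum length $N$ of an $\mathbb{R}$-Sidon sequence $(m_n)_{n=1}^N$ with all elements in $[1,k]$. Then $$\limsup_{k\to\infty}\frac{N(k)}{\sqrt{k}}\le 1.$$
   Context: A finite sequence of real numbers $(m_n)_{n=1}^N$ is an $\mathbb{R}$-Sidon sequence if $|(m_{n_1}+m_{n_2})-(m_n+m_{n_3})|\ge1$ for all $n_1,n_2,n,n_3\in\{1,\ldots,N\}$ with $(n_1,n_2)\ne(n,n_3)$ and $(n_1,n_2)\ne(n_3,n)$. *)

From Stdlib Require Import Reals Lra Lia.
Open Scope R_scope.

(* A finite real sequence (m_n)_{n=1}^N is represented by m : nat -> R,
   only the values at indices 1..N being relevant. *)
Definition R_Sidon (N : nat) (m : nat -> R) : Prop :=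
  forall n1 n2 n n3 : nat,
    (1 <= n1 <= N)%nat -> (1 <= n2 <= N)%nat ->
    (1 <= n <= N)%nat -> (1 <= n3 <= N)%nat ->
    (n1, n2) <> (n, n3) -> (n1, n2) <> (n3, n) ->
    Rabs ((m n1 + m n2) - (m n + m n3)) >= 1.

Definition in_range (k : nat) (N : nat) (m : nat -> R) : Prop :=
  forall i : nat, (1 <= i <= N)%nat -> 1 <= m i <= INR k.

Definition Sidon_in (k N : nat) : Prop :=
  exists m : nat -> R, R_Sidon N m /\ in_range k N m.

Definition is_max_Sidon_length (k Nk : nat) : Prop :=
  Sidon_in k Nk /\ (forall N : nat, Sidon_in k N -> (N <= Nk)%nat).

(* Put each point m_i into the integer cell c_i = floor m_i and let a_s count
   the points whose window [c_i, c_i + u) contains s, for s < k + u.  Then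
   sum_s a_s = N u, while sum_s a_s^2 counts pairs with overlapping windows:
   the diagonal gives N u, and a pair (i, j), i <> j, contributes at most
   u - floor |m_i - m_j|.  The differences of an R-Sidon sequence are
   1-separated, so each value of floor |m_i - m_j| comes from at most two
   ordered pairs, whence sum_s a_s^2 <= N u + u (u + 1).  Cauchy-Schwarz over
   the k + u positions gives N^2 u <= (k + u) (N + u + 1), and u ~ C sqrt k
   with C large yields N <= (1 + O(1/C) + o(1)) sqrt k. *)

From Stdlib Require Import Reals Lra Lia ZArith.
From mathcomp Require Import all_boot zify.
Set Implicit Arguments. Unset Strict Implicit.
Local Open Scope nat_scope.

Lemma sqr_sum_le (I : finType) (a : I -> nat) :
  (\sum_i a i) ^ 2 <= #|I| * \sum_i a i ^ 2.
Proof.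
have sqr_sum : (\sum_i a i) ^ 2 = \sum_i \sum_j a i * a j.
  by rewrite expnS expn1 big_distrl; apply: eq_bigr => i _; rewrite big_distrr.
have double : \sum_i \sum_j (a i ^ 2 + a j ^ 2) = 2 * (#|I| * \sum_i a i ^ 2).
  under eq_bigr do rewrite big_split /= sum_nat_const.
  by rewrite big_split /= -big_distrr /= mul2n -addnn sum_nat_const.
rewrite -(@leq_pmul2l 2) // -double sqr_sum big_distrr /=.
apply: leq_sum => i _; rewrite big_distrr /=; apply: leq_sum => j _.
exact: (nat_Cauchy (a i) (a j)).1.
Qed.

Lemma sum_ord_in_itv M lo hi : \sum_(s < M) (lo <= s < hi) = minn M hi - lo.
Proof.
elim: M => [|M IH]; first by rewrite big_ord0; lia.
by rewrite big_ord_recr /= IH; case: (boolP (lo <= M < hi)) => /=; lia.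
Qed.

Lemma window_overlap_le M u a b :
  \sum_(s < M) ((a <= s < a + u) && (b <= s < b + u)) <= minn a b + u - maxn a b.
Proof.
apply: (@leq_trans (\sum_(s < M) (maxn a b <= s < minn a b + u))).
  by apply: leq_sum => s _; case: andP => //; lia.
rewrite sum_ord_in_itv; lia.
Qed.

Lemma sum_ord_subn_double u : \sum_(t < u) (u - t).*2 = u * u.+1.
Proof.
elim: u => [|u IH]; first by rewrite big_ord0.
rewrite big_ord_recl subn0.
under eq_bigr do rewrite lift0 subSS.
rewrite IH; lia.
Qed.

Lemma sum_subn_le_of_fibres (T : finType) (P : pred T) (g : T -> nat) u :
  (forall t, #|[pred p | P p & g p == t]| <= 2) ->
  \sum_(p | P p) (u - g p) <= u * u.+1.
Proof.
move=> fibre_le2.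
have split_value p : u - g p = \sum_(t < u) (g p == t) * (u - t).
  case: (ltnP (g p) u) => [lt_gu | le_ug].
    rewrite (bigD1 (Ordinal lt_gu)) //= eqxx mul1n big1 ?addn0 // => t ne_t.
    suff /negbTE -> : g p != t by [].
    by apply: contra ne_t => /eqP e; apply/eqP/val_inj.
  rewrite big1; first lia.
  by move=> t _; case: eqP => [e|]; first lia.
under eq_bigr do rewrite split_value.
rewrite exchange_big /= -sum_ord_subn_double.
apply: leq_sum => t _.
rewrite -big_distrl /= -mul2n leq_mul2r; apply/orP; right.
apply: leq_trans (fibre_le2 t).
rewrite -sum1_card big_mkcond [X in _ <= X]big_mkcond /=.
by apply: leq_sum => p _; rewrite inE; case: (P p); case: (g p == t).
Qed.

Definition window_load (I : finType) (c : I -> nat) (u s : nat) : nat :=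
  \sum_i (c i <= s < c i + u).

Section WindowCounting.

Variables (I : finType) (c : I -> nat) (u M : nat).
Hypothesis window_fits : forall i, c i + u <= M.

Lemma sum_window_load : \sum_(s < M) window_load c u s = #|I| * u.
Proof.
rewrite exchange_big /= (eq_bigr (fun=> u)) ?sum_nat_const // => i _.
by rewrite sum_ord_in_itv; have := window_fits i; lia.
Qed.

Lemma sum_window_load_sqr :
  \sum_(s < M) window_load c u s ^ 2 =
  \sum_i \sum_j \sum_(s < M) ((c i <= s < c i + u) && (c j <= s < c j + u)).
Proof.
under [RHS]eq_bigr do rewrite exchange_big.
rewrite exchange_big; apply: eq_bigr => s _.
rewrite expnS expn1 big_distrl; apply: eq_bigr => i _.
by rewrite big_distrr; apply: eq_bigr => j _; do 2 case: (_ <= s < _ + u).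
Qed.

Variable f : I -> I -> nat.
Hypothesis f_le_gap : forall i j, f i j <= maxn (c i) (c j) - minn (c i) (c j).
Hypothesis f_fibre_le2 :
  forall t, #|[pred p : I * I | (p.1 != p.2) & f p.1 p.2 == t]| <= 2.

Lemma sum_window_load_sqr_le :
  \sum_(s < M) window_load c u s ^ 2 <= #|I| * u + u * u.+1.
Proof.
have overlap_le i j :
    \sum_(s < M) ((c i <= s < c i + u) && (c j <= s < c j + u)) <=
    (if i == j then u else u - f i j).
  apply: leq_trans (window_overlap_le _ _ _ _) _.
  by case: eqP => [->|_]; [lia | have := f_le_gap i j; lia].
have diagonal i :
    \sum_j (if i == j then u else u - f i j) = u + \sum_(j | i != j) (u - f i j).
  rewrite (bigD1 i) //= eqxx; congr (_ + _).
  rewrite (eq_bigl (fun j => i != j)) => [|j]; last by rewrite eq_sym.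
  by apply: eq_bigr => j /negbTE ->.
rewrite sum_window_load_sqr.
apply: (@leq_trans (\sum_i \sum_j (if i == j then u else u - f i j))).
  by apply: leq_sum => i _; apply: leq_sum => j _; exact: overlap_le.
under eq_bigr do rewrite diagonal.
rewrite big_split /= sum_nat_const leq_add2l pair_big_dep /=.
exact: sum_subn_le_of_fibres.
Qed.

Theorem window_card_bound : 0 < u -> #|I| ^ 2 * u <= M * (#|I| + u + 1).
Proof.
move=> u_gt0.
have := sqr_sum_le (fun s : 'I_M => window_load c u s).
rewrite card_ord sum_window_load => cauchy_schwarz.
have := leq_trans cauchy_schwarz (leq_mul (leqnn M) sum_window_load_sqr_le).
rewrite -(leq_pmul2l u_gt0); nia.
Qed.

End WindowCounting.

Local Open Scope R_scope.

Definition nfloor (x : R) : nat := Z.to_nat (Int_part x).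

Lemma nfloor_spec x : 0 <= x -> INR (nfloor x) <= x < INR (nfloor x) + 1.
Proof.
move=> x_ge0; have [lo hi] := base_Int_part x.
have : (-1 < Int_part x)%Z by apply: lt_IZR; lra.
by rewrite /nfloor INR_IZR_INZ => ?; rewrite Z2Nat.id; [lra | lia].
Qed.

Lemma nfloor_sub_le x y : 0 <= y <= x -> (nfloor (x - y) + nfloor y <= nfloor x)%N.
Proof.
move=> [y_ge0 le_yx]; apply/leP/Nat.lt_succ_r/INR_lt.
have x_ge0 : 0 <= x by lra.
have xy_ge0 : 0 <= x - y by lra.
have := nfloor_spec x_ge0; have := nfloor_spec y_ge0; have := nfloor_spec xy_ge0.
rewrite S_INR plus_INR; lra.
Qed.

Lemma nfloor_dist_le x y : 0 <= x -> 0 <= y ->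
  (nfloor (Rabs (x - y)) <= maxn (nfloor x) (nfloor y) - minn (nfloor x) (nfloor y))%N.
Proof.
move=> x_ge0 y_ge0; case: (Rle_dec y x) => [le_yx | /Rnot_le_lt lt_xy].
  by rewrite Rabs_right; [have := nfloor_sub_le (conj y_ge0 le_yx); lia | lra].
rewrite Rabs_left; last lra.
by rewrite Ropp_minus_distr; have := nfloor_sub_le (conj x_ge0 (Rlt_le _ _ lt_xy)); lia.
Qed.

Lemma nfloor_eq_dist_lt x y : 0 <= x -> 0 <= y -> nfloor x = nfloor y -> Rabs (x - y) < 1.
Proof.
move=> x_ge0 y_ge0 eq_xy; have := nfloor_spec x_ge0; have := nfloor_spec y_ge0.
rewrite eq_xy; split_Rabs; lra.
Qed.

Definition diff_separated (I : Type) (x : I -> R) : Prop :=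
  forall i j a b, i <> j -> a <> b -> (i, j) <> (a, b) ->
    1 <= Rabs ((x i - x j) - (x a - x b)).

Lemma nfloor_dist_fibre_le2 (I : finType) (x : I -> R) t :
  diff_separated x ->
  (#|[pred p : I * I | (p.1 != p.2) & nfloor (Rabs (x p.1 - x p.2)) == t]| <= 2)%N.
Proof.
move=> x_sep.
(* A pair in the fibre is determined by the sign of x p.1 - x p.2: two pairs
   with equal floors and equal signs have differences less than 1 apart. *)
pose ascending (p : I * I) := is_left (Rle_dec (x p.2) (x p.1)).
rewrite -[2%N]card_bool; apply: (@leq_card_in _ _ ascending).
move=> [i j] [a b]; rewrite !inE /= => /andP[/eqP ne_ij /eqP fl_ij] /andP[/eqP ne_ab /eqP fl_ab].
have close : Rabs (Rabs (x i - x j) - Rabs (x a - x b)) < 1.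
  by apply: nfloor_eq_dist_lt; [exact: Rabs_pos | exact: Rabs_pos | rewrite fl_ij fl_ab].
case: (eqVneq (i, j) (a, b)) => // /eqP ne_pairs; rewrite /ascending /=.
have far := x_sep i j a b ne_ij ne_ab ne_pairs.
by case: Rle_dec => dir_ij; case: Rle_dec => dir_ab //= _; move: close far; split_Rabs; lra.
Qed.

Lemma R_Sidon_diff_separated N m : R_Sidon N m -> diff_separated (fun i : 'I_N => m i.+1).
Proof.
move=> sidon i j a b ne_ij ne_ab ne_pairs.
have -> : m i.+1 - m j.+1 - (m a.+1 - m b.+1) = m i.+1 + m b.+1 - (m a.+1 + m j.+1) by ring.
apply: Rge_le; apply: sidon; try (have := ltn_ord i; have := ltn_ord j;
  have := ltn_ord a; have := ltn_ord b; lia).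
  by case=> e_ia e_bj; apply: ne_pairs; congr pair; apply: val_inj.
by case=> e_ij _; apply: ne_ij; apply: val_inj.
Qed.

Lemma R_Sidon_card_bound k N m u : R_Sidon N m -> in_range k N m -> (0 < u)%N ->
  (N ^ 2 * u <= (k + u) * (N + u + 1))%N.
Proof.
move=> sidon m_range u_gt0.
have m_bounds (i : 'I_N) : 1 <= m i.+1 <= INR k by apply: m_range; have := ltn_ord i; lia.
have m_ge0 (i : 'I_N) : 0 <= m i.+1 by have := m_bounds i; lra.
pose c (i : 'I_N) := nfloor (m i.+1).
pose f (i j : 'I_N) := nfloor (Rabs (m i.+1 - m j.+1)).
have fits i : (c i + u <= k + u)%N.
  rewrite leq_add2r; apply/leP/INR_le; rewrite /c.
  by have := nfloor_spec (m_ge0 i); have := m_bounds i; lra.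
have gap i j : (f i j <= maxn (c i) (c j) - minn (c i) (c j))%N by exact: nfloor_dist_le.
have fibre t := nfloor_dist_fibre_le2 t (R_Sidon_diff_separated sidon).
by have := window_card_bound fits gap fibre u_gt0; rewrite card_ord.
Qed.

Lemma le_of_sqr_le_quadratic (N s d : R) : 0 <= d -> 0 <= s ->
  N ^ 2 <= d * N * s + (1 + d) * s ^ 2 -> N <= (1 + 2 * d) * s.
Proof.
move=> d_ge0 s_ge0 quadratic; apply: Rnot_lt_le => large.
have : (1 + 2 * d) * s * ((1 + d) * s) < N * (N - d * s).
  by apply: Rmult_le_0_lt_compat; nra.
nra.
Qed.

Lemma window_bound_asymptotics (N s u c d : R) :
  0 < d -> 0 <= N -> 1 <= c -> 2 <= d * c -> 1 <= s -> 2 * c + 2 <= d * s ->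
  c * s <= u <= c * (s + 1) ->
  N ^ 2 * u <= (s ^ 2 + u) * (N + u + 1) -> N <= (1 + 2 * d) * s.
Proof.
move=> d_gt0 N_ge0 c_ge1 dc_ge2 s_ge1 ds_large [u_lo u_hi] window.
apply: le_of_sqr_le_quadratic; [lra | lra |].
have s_le_u : s <= u by nra.
have linear_part : s ^ 2 + u <= d * u * s.
  have : 2 * (s * s) <= d * c * (s * s) by apply: Rmult_le_compat_r; nra.
  have : d * s * (c * s) <= d * s * u by apply: Rmult_le_compat_l; nra.
  have : 2 * u <= d * s * u by apply: Rmult_le_compat_r; lra.
  nra.
have quadratic_part : s ^ 2 + u ^ 2 + u <= d * u * s ^ 2.
  have : u * u <= u * (2 * c * s) by apply: Rmult_le_compat_l; nra.
  have : (2 * c + 2) * (s * u) <= d * s * (s * u) by apply: Rmult_le_compat_r; nra.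
  nra.
apply: (Rmult_le_reg_l u); first lra.
nra.
Qed.

Lemma INR_Nat_sqrt_bounds k : INR (Nat.sqrt k) <= sqrt (INR k) < INR (Nat.sqrt k) + 1.
Proof.
have [lo hi] := Nat.sqrt_spec' k; have n_ge0 := pos_INR (Nat.sqrt k).
split.
  rewrite -(sqrt_square (INR (Nat.sqrt k))) //.
  by apply: sqrt_le_1_alt; rewrite -mult_INR; apply: le_INR.
rewrite -(sqrt_square (INR (Nat.sqrt k) + 1)); last lra.
apply: sqrt_lt_1_alt; split; first exact: pos_INR.
by rewrite -S_INR -mult_INR; apply: lt_INR.
Qed.

Lemma eventually_le_sqrt_INR x : exists K : nat, forall k : nat, (K <= k)%N -> x <= sqrt (INR k).
Proof.
have [K K_large] := INR_unbounded (x * x).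
exists K => k /leP/le_INR le_Kk.
apply: Rle_trans (Rle_abs x) _; rewrite -sqrt_Rsqr_abs.
by apply: sqrt_le_1_alt; rewrite /Rsqr; lra.
Qed.

Lemma Rdiv_le_iff_le_mul a b d : 0 < d -> a / d <= b <-> a <= b * d.
Proof.
move=> d_gt0; have a_eq : a = a / d * d by field; lra.
split=> [le_ab | le_abd].
  by rewrite a_eq; apply: Rmult_le_compat_r; lra.
by apply: (Rmult_le_reg_r d) => //; rewrite -a_eq.
Qed.

Lemma R_Sidon_length_le k N m c d : R_Sidon N m -> in_range k N m -> 0 < d ->
  (0 < c)%N -> 2 / d <= INR c -> 1 <= sqrt (INR k) -> (2 * INR c + 2) / d <= sqrt (INR k) ->
  INR N <= (1 + 2 * d) * sqrt (INR k).
Proof.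
move=> sidon m_range d_gt0 c_gt0 /(Rdiv_le_iff_le_mul _ _ d_gt0) dc_ge2 s_ge1
  /(Rdiv_le_iff_le_mul _ _ d_gt0) ds_large.
have [n_le_s s_lt_n1] := INR_Nat_sqrt_bounds k.
set s := sqrt (INR k) in s_ge1 ds_large n_le_s s_lt_n1 *; set u := (c * (Nat.sqrt k).+1)%N.
have c_ge1 : 1 <= INR c by apply: (le_INR 1); apply/leP.
have u_gt0 : (0 < u)%N by rewrite muln_gt0 c_gt0.
have u_bounds : INR c * s <= INR u <= INR c * (s + 1).
  by rewrite /u -multE mult_INR S_INR; split; apply: Rmult_le_compat_l; lra.
clearbody u.
apply: (window_bound_asymptotics d_gt0 (pos_INR N) c_ge1 _ s_ge1 _ u_bounds); [lra | lra |].
have s_sqr : s ^ 2 = INR k by apply: pow2_sqrt; exact: pos_INR.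
move: (R_Sidon_card_bound sidon m_range u_gt0) => /leP/le_INR.
by rewrite -mulnn -!multE -!plusE !mult_INR !plus_INR INR_1 s_sqr -Rsqr_pow2.
Qed.

Theorem lemma3 (Nf : nat -> nat)
  (HN : forall k : nat, (0 < k)%coq_nat -> is_max_Sidon_length k (Nf k)) :
  forall eps : R, 0 < eps ->
    exists K : nat, forall k : nat, (K <= k)%coq_nat ->
      INR (Nf k) / sqrt (INR k) <= 1 + eps.
Proof.
move=> eps eps_gt0; set d := eps / 2; have d_gt0 : 0 < d by rewrite /d; lra.
have [c c_large] := INR_unbounded (2 / d).
set threshold := (2 * INR c.+1 + 2) / d.
have [K K_large] := eventually_le_sqrt_INR (Rmax 1 threshold).
exists K.+1 => k /leP le_Kk.
have [m [sidon m_range]] := proj1 (HN k (ltP (leq_ltn_trans (leq0n K) le_Kk))).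
have c_ge : 2 / d <= INR c.+1 by rewrite S_INR; lra.
have s_large := K_large k (ltnW le_Kk).
have s_ge1 := Rle_trans _ _ _ (Rmax_l _ _) s_large.
have N_le := R_Sidon_length_le sidon m_range d_gt0 (ltn0Sn c) c_ge s_ge1
  (Rle_trans _ _ _ (Rmax_r _ _) s_large).
have s_gt0 : 0 < sqrt (INR k) by lra.
by apply/(Rdiv_le_iff_le_mul _ _ s_gt0); rewrite /d in N_le; lra.
Qed.
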